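(* Let $\rho\in(-1,1)$, $\alpha>0$, $\mu>0$, $\Sigma=\begin{pmatrix}1&\rho\\\rho&1\end{pmatrix}$, and $g(t)=\frac1t\inf_{\vec x\ge(1+t,\ \alpha+\mu t)^\top}\vec x^\top\Sigma^{-1}\vec x$ for $t\ge0$. Let $t_0$ denote the unique minimiser of $g$ on $[0,\infty)$, $I$ the essential index set and $K$ the weakly essential index set associated with $\vec b=(1+t_0,\alpha+\mu t_0)^\top$, $\widehat g=g(t_0)$ and $\widetilde g$ as in the context. Then: (i) Suppose ($\mu<1$ and $\alpha<1$), or ($\mu<1$, $\alpha\ge1$, $\mu\le1/\alpha$), or ($\mu\ge1$, $\alpha<1$, $\mu\le1/\alpha$). (i.R1) If $-1<\rho<\frac{\alpha+\mu}2$: $t_0=t_0^{(0)}$, $I=\{1,2\}$, $K=\emptyset$, $\widehat g=g_0(t_0^{(0)})$, $\widetilde g=g_0''(t_0^{(0)})$. (i.R2) If $\rho=\frac{\alpha+\mu}2$: $t_0=t_0^{(0)}=t_0^{(1)}$, $I=\{1\}$, $K=\{2\}$, $\widehat g=g_0(t_0^{(0)})=g_1(t_0^{(1)})=4$, $\widetilde g=g_1''(t_0^{(1)})=2$. (i.R3) If $\frac{\alpha+\mu}2<\rho<1$: $t_0=t_0^{(1)}$, $I=\{1\}$, $K=\emptyset$, $\widehat g=g_1(t_0^{(1)})=4$, $\widetilde g=g_1''(t_0^{(1)})=2$. (ii) Suppose ($\mu\ge1$ and $\alpha\ge1$), or ($\mu<1$, $\alpha\ge1$, $\mu>1/\alpha$),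 or ($\mu\ge1$, $\alpha<1$, $\mu>1/\alpha$). (ii.R1) If $-1<\rho<\frac{\alpha+\mu}{2\alpha\mu}$: $t_0=t_0^{(0)}$, $I=\{1,2\}$, $K=\emptyset$, $\widehat g=g_0(t_0^{(0)})$, $\widetilde g=g_0''(t_0^{(0)})$. (ii.R2) If $\rho=\frac{\alpha+\mu}{2\alpha\mu}$: $t_0=t_0^{(0)}=t_0^{(2)}$, $I=\{2\}$, $K=\{1\}$, $\widehat g=g_0(t_0^{(0)})=g_2(t_0^{(2)})=4\alpha\mu$, $\widetilde g=g_2''(t_0^{(2)})=2\alpha^{-1}\mu^3$. (ii.R3) If $\frac{\alpha+\mu}{2\alpha\mu}<\rho<1$: $t_0=t_0^{(2)}$, $I=\{2\}$, $K=\emptyset$, $\widehat g=g_2(t_0^{(2)})=4\alpha\mu$, $\widetilde g=g_2''(t_0^{(2)})=2\alpha^{-1}\mu^3$.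
   Context: For positive definite $M$ and $\vec b\notin(-\infty,0]^2$, minimising $\vec x^\top M^{-1}\vec x$ over $\vec x\ge\vec b$ has a unique solution $\widetilde{\vec b}$ and a unique non-empty essential index set $I\subseteq\{1,2\}$ with $\widetilde{\vec b}_I=\vec b_I$, $M_{II}^{-1}\vec b_I>0$, and $\widetilde{\vec b}_{I^c}=M_{I^cI}M_{II}^{-1}\vec b_I\ge\vec b_{I^c}$ if $I^c\ne\emptyset$ (here $\vec a_I$, $M_{IJ}$ denote sub-vectors/sub-matrices). The weakly essential index set is $K=\{j\notin I:\Sigma_{jI}\Sigma_{II}^{-1}\vec b_I=b_j\}$ (with $M=\Sigma$). Writing $\vec\alpha=(1,\alpha)^\top$, $\vec\mu=(1,\mu)^\top$, $\widetilde g=2t_0^{-3}\vec\alpha_I^\top\Sigma_{II}^{-1}\vec\alpha_I$. Further $g_0(t)=\frac{1+\alpha^2-2\alpha\rho}{1-\rho^2}\frac1t+\frac{2(1+\alpha\mu-\rho\alpha-\rho\mu)}{1-\rho^2}+\frac{1+\mu^2-2\rho\mu}{1-\rho^2}t$, $g_1(t)=\frac1t(1+t)^2$, $g_2(t)=\frac1t(\alpha+\mu t)^2$, with unique minimisers on $[0,\infty)$ given by $t_0^{(0)}=\sqrt{\frac{1+\alpha^2-2\alpha\rho}{1+\mu^2-2\mu\rho}}$, $t_0^{(1)}=1$, $t_0^{(2)}=\alpha/\mu$. *)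

From HB Require Import structures.
From mathcomp Require Import all_boot all_order all_algebra.
From mathcomp Require Import all_classical all_reals all_analysis.
Set Implicit Arguments. Unset Strict Implicit. Unset Printing Implicit Defensive.
Import Order.TTheory GRing.Theory Num.Theory.
Local Open Scope ring_scope.
Local Open Scope classical_set_scope.

Section Defs.
Variable R : realType.

Definition vle (m : nat) (x y : 'cV[R]_m) : Prop := forall i, x i 0 <= y i 0.

Section QP.
Variable n : nat.

Definition qform (M : 'M[R]_n) (x : 'cV[R]_n) : R := (x^T *m invmx M *m x) 0 0.

Definition is_qp_min (M : 'M[R]_n) (b x : 'cV[R]_n) : Prop :=
  vle b x /\ forall y, vle b y -> qform M x <= qform M y.

(* sub-vector a_I and sub-matrix M_{IJ} (indices enumerated increasingly) *)
Definition subcv (I : {set 'I_n}) (a : 'cV[R]_n) : 'cV[R]_#|I| :=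
  \col_(k < #|I|) a (enum_val k) 0.
Definition submx (I J : {set 'I_n}) (M : 'M[R]_n) : 'M[R]_(#|I|, #|J|) :=
  \matrix_(k < #|I|, l < #|J|) M (enum_val k) (enum_val l).

Definition is_essential (M : 'M[R]_n) (b : 'cV[R]_n) (I : {set 'I_n}) : Prop :=
  I != finset.set0 /\
  exists bt : 'cV[R]_n,
    [/\ is_qp_min M b bt,
        subcv I bt = subcv I b,
        (forall k, 0 < (invmx (submx I I M) *m subcv I b) k 0),
        subcv (~: I) bt = submx (~: I) I M *m invmx (submx I I M) *m subcv I b
      & vle (subcv (~: I) b) (subcv (~: I) bt)].

(* THE essential index set (unique by the context) *)
Definition essential_set (M : 'M[R]_n) (b : 'cV[R]_n) : {set 'I_n} :=
  xget finset.set0 [set I | is_essential M b I].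

Definition weak_essential_set (M : 'M[R]_n) (b : 'cV[R]_n) : {set 'I_n} :=
  let I := essential_set M b in
  [set j | (j \notin I) &&
     (((\row_(k < #|I|) M j (enum_val k)) *m invmx (submx I I M) *m subcv I b) 0 0
        == b j 0)].

Definition gtilde (M : 'M[R]_n) (b a : 'cV[R]_n) (t0 : R) : R :=
  let I := essential_set M b in
  2 * t0 ^- 3 * ((subcv I a)^T *m invmx (submx I I M) *m subcv I a) 0 0.
End QP.

Definition col2 (a b : R) : 'cV[R]_2 := \col_(i < 2) [:: a; b]`_i.

Definition idx1 : 'I_2 := ord0.
Definition idx2 : 'I_2 := ord_max.

Definition Sigma (rho : R) : 'M[R]_2 :=
  \matrix_(i < 2, j < 2) (if i == j then 1 else rho).

Definition bvec (alpha mu t : R) : 'cV[R]_2 := col2 (1 + t) (alpha + mu * t).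

(* g(t) = t^{-1} inf_{x >= b(t)} x^T Sigma^{-1} x   (used for t > 0) *)
Definition g (rho alpha mu t : R) : R :=
  t^-1 * inf [set qform (Sigma rho) x | x in [set x | vle (bvec alpha mu t) x]].

Definition g0 (rho alpha mu t : R) : R :=
  (1 + alpha ^+ 2 - 2 * alpha * rho) / (1 - rho ^+ 2) * t^-1
  + 2 * (1 + alpha * mu - rho * alpha - rho * mu) / (1 - rho ^+ 2)
  + (1 + mu ^+ 2 - 2 * rho * mu) / (1 - rho ^+ 2) * t.
Definition g1 (t : R) : R := t^-1 * (1 + t) ^+ 2.
Definition g2 (alpha mu t : R) : R := t^-1 * (alpha + mu * t) ^+ 2.

Definition t00 (rho alpha mu : R) : R :=
  Num.sqrt ((1 + alpha ^+ 2 - 2 * alpha * rho) / (1 + mu ^+ 2 - 2 * mu * rho)).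
Definition t01 : R := 1.
Definition t02 (alpha mu : R) : R := alpha / mu.

Definition d2 (f : R -> R) : R -> R := derive1 (derive1 f).

(* t0 is the unique minimiser of f on (0, oo)  (g(0) = +oo) *)
Definition unique_min (f : R -> R) (t0 : R) : Prop :=
  [/\ 0 < t0,
      (forall t, 0 < t -> f t0 <= f t)
    & (forall t, 0 < t -> f t = f t0 -> t = t0)].

Definition regime (rho alpha mu t0 : R) (I K : {set 'I_2}) (ghat gtil : R) : Prop :=
  [/\ unique_min (g rho alpha mu) t0,
      essential_set (Sigma rho) (bvec alpha mu t0) = I,
      weak_essential_set (Sigma rho) (bvec alpha mu t0) = K,
      g rho alpha mu t0 = ghat
    & gtilde (Sigma rho) (bvec alpha mu t0) (col2 1 alpha) t0 = gtil].

End Defs.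

From mathcomp Require Import all_boot all_order all_algebra.
From mathcomp Require Import all_classical all_reals all_analysis.
From mathcomp Require Import ring lra.
Import Order.TTheory GRing.Theory Num.Theory.
Local Open Scope ring_scope.
Local Open Scope classical_set_scope.
Set Implicit Arguments. Unset Strict Implicit. Unset Printing Implicit Defensive.

(* For [Sigma = [[1, rho], [rho, 1]]] the program [min x^T Sigma^-1 x, x >= b] has
   three possible shapes: [b] itself when [Sigma^-1 b > 0] (I = {1,2}), or an edge
   point [(b_i, rho b_i)] when [b_j <= rho b_i] (I = {i}); these conditions are
   mutually exclusive, which identifies I and K.  Since [x^T Sigma^-1 x >= x_i^2],
   [g >= g_i], and [g_i(t) = g_i(t0^(i)) + c (t - t0^(i))^2 / t]; Cauchy-Schwarz in
   the direction [Sigma^-1 b(t0^(0))] similarly gives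
   [g(t) >= g_0(t0^(0)) + c (t - t0^(0))^2 / t].  In each regime one of these bounds
   is attained, so its centre is the unique minimiser.  On the boundary both
   descriptions hold, and as [g <= g_0] with equality there, [t0^(0)] is the
   minimiser as well. *)

Lemma ord2_cases (i : 'I_2) : i = idx1 \/ i = idx2.
Proof. by case: i => [[|[|i]] Hi] //; [left|right]; apply: val_inj. Qed.

Lemma ord2_neq_cases (i j : 'I_2) :
  i != j -> (i = idx1 /\ j = idx2) \/ (i = idx2 /\ j = idx1).
Proof. by case: (ord2_cases i) => ->; case: (ord2_cases j) => ->; auto. Qed.

Lemma ord2_other (i j k : 'I_2) : i != j -> k != i -> k = j.
Proof.
by case: (ord2_cases i) => ->; case: (ord2_cases j) => ->; case: (ord2_cases k) => ->.
Qed.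

Lemma sum_ord2 (R : nmodType) (F : 'I_2 -> R) : \sum_(k < 2) F k = F idx1 + F idx2.
Proof. by rewrite big_ord_recr big_ord1; congr (F _ + F _); apply: val_inj. Qed.

Lemma Sigma_diag (R : realType) (rho : R) i : Sigma rho i i = 1.
Proof. by rewrite mxE eqxx. Qed.

Lemma Sigma_offdiag (R : realType) (rho : R) i j : i != j -> Sigma rho i j = rho.
Proof. by rewrite mxE => /negbTE ->. Qed.

Lemma invmx_eq (R : comUnitRingType) n (A B : 'M[R]_n.+1) :
  A *m B = 1%:M -> invmx A = B.
Proof.
move=> AB; have [uA _] := mulmx1_unit AB.
by rewrite -[invmx A]mulmx1 -AB mulmxA mulVmx // mul1mx.
Qed.

Section Sigma.
Variable R : realType.
Variable rho : R.
Hypotheses (rho_gtN1 : -1 < rho) (rho_lt1 : rho < 1).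

Lemma one_sub_rho2_gt0 : 0 < 1 - rho ^+ 2.
Proof. by have r1 := rho_gtN1; have r2 := rho_lt1; nra. Qed.

Lemma one_sub_rho2_neq0 : 1 - rho ^+ 2 != 0.
Proof. exact: lt0r_neq0 one_sub_rho2_gt0. Qed.

Lemma Sigma_invE :
  invmx (Sigma rho) = (1 - rho ^+ 2)^-1 *: \matrix_(i, j) (if i == j then 1 else - rho).
Proof.
have c0 := one_sub_rho2_neq0.
apply: invmx_eq; apply/matrixP => i j; rewrite !mxE sum_ord2 !mxE.
by case: (ord2_cases i) => ->; case: (ord2_cases j) => -> /=; field.
Qed.

Lemma Sigma_inv_mulE (b : 'cV[R]_2) i j : i != j ->
  (invmx (Sigma rho) *m b) i 0 = (b i 0 - rho * b j 0) / (1 - rho ^+ 2).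
Proof.
rewrite Sigma_invE => /ord2_neq_cases[[-> ->]|[-> ->]];
  by rewrite -scalemxAl !mxE sum_ord2 !mxE /=; ring.
Qed.

Definition q2 (x1 x2 : R) : R := (x1 ^+ 2 - 2 * rho * x1 * x2 + x2 ^+ 2) / (1 - rho ^+ 2).

Lemma qform_SigmaE (x : 'cV[R]_2) i j : i != j -> qform (Sigma rho) x = q2 (x i 0) (x j 0).
Proof.
move=> ij; rewrite /qform Sigma_invE -scalemxAr -scalemxAl.
rewrite !mxE sum_ord2 !mxE !sum_ord2 !mxE.
by case/ord2_neq_cases: ij => -[-> ->] /=; rewrite /q2; ring.
Qed.

Lemma q2_edge x1 : q2 x1 (rho * x1) = x1 ^+ 2.
Proof. by have c0 := one_sub_rho2_neq0; rewrite /q2; field. Qed.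

Lemma q2_ge_sqr x1 x2 : x1 ^+ 2 <= q2 x1 x2.
Proof.
have c0 := one_sub_rho2_gt0.
by rewrite /q2 ler_pdivlMr //; have := sqr_ge0 (x2 - rho * x1); nra.
Qed.

Lemma q2_Cauchy_Schwarz w1 w2 x1 x2 :
  (w1 * x1 + w2 * x2) ^+ 2 <= q2 x1 x2 * (w1 ^+ 2 + 2 * rho * w1 * w2 + w2 ^+ 2).
Proof.
have c0 := one_sub_rho2_gt0.
rewrite /q2 mulrAC ler_pdivlMr //.
have := sqr_ge0 (x1 * w2 - x2 * w1 + rho * (x1 * w1 - x2 * w2)); nra.
Qed.

Lemma q2_le_shift b1 b2 x1 x2 : rho * b2 <= b1 -> rho * b1 <= b2 ->
  b1 <= x1 -> b2 <= x2 -> q2 b1 b2 <= q2 x1 x2.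
Proof.
move=> w1 w2 h1 h2; have c0 := one_sub_rho2_gt0.
rewrite /q2 ler_pM2r ?invr_gt0 //.
have := sqr_ge0 ((x1 - b1) - rho * (x2 - b2)).
have : 0 <= (1 - rho ^+ 2) * (x2 - b2) ^+ 2 by rewrite mulr_ge0 ?sqr_ge0 ?(ltW c0).
have : 0 <= (x1 - b1) * (b1 - rho * b2) by rewrite mulr_ge0 // subr_ge0.
have : 0 <= (x2 - b2) * (b2 - rho * b1) by rewrite mulr_ge0 // subr_ge0.
nra.
Qed.

End Sigma.

Section EssentialAt.
Variable R : realType.

(* [is_essential] indexes [b_I] by [enum_val : 'I_#|I| -> 'I_n]; abstracting
   that map lets the size [#|I|] be substituted by its value. *)
Definition subcv_at n m (f : 'I_m -> 'I_n) (a : 'cV[R]_n) : 'cV[R]_m :=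
  \col_k a (f k) 0.
Definition submx_at n m1 m2 (f1 : 'I_m1 -> 'I_n) (f2 : 'I_m2 -> 'I_n) (M : 'M[R]_n) :
  'M[R]_(m1, m2) := \matrix_(k, l) M (f1 k) (f2 l).

Definition essential_at n m mc (f : 'I_m -> 'I_n) (fc : 'I_mc -> 'I_n)
    (M : 'M[R]_n) (b bt : 'cV[R]_n) : Prop :=
  [/\ subcv_at f bt = subcv_at f b,
      (forall k, 0 < (invmx (submx_at f f M) *m subcv_at f b) k 0),
      subcv_at fc bt = submx_at fc f M *m invmx (submx_at f f M) *m subcv_at f b
    & vle (subcv_at fc b) (subcv_at fc bt)].

Lemma is_essentialE n (M : 'M[R]_n) b I :
  is_essential M b I <-> I != finset.set0 /\
    exists bt, is_qp_min M b bt /\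
      essential_at (@enum_val _ (mem I)) (@enum_val _ (mem (~: I))) M b bt.
Proof.
split=> -[I0 [bt H]]; split=> //; exists bt; first by case: H.
by case: H => ? [].
Qed.

Lemma subcv_at_id (f : 'I_2 -> 'I_2) (a : 'cV[R]_2) :
  (forall k, val (f k) = val k) -> subcv_at f a = a.
Proof.
move=> fE; apply/matrixP => k l.
by rewrite mxE (ord1 l); congr (a _ 0); apply: val_inj.
Qed.

Lemma submx_at_id (f : 'I_2 -> 'I_2) (M : 'M[R]_2) :
  (forall k, val (f k) = val k) -> submx_at f f M = M.
Proof. by move=> fE; apply/matrixP => k l; rewrite mxE; congr (M _ _); apply: val_inj. Qed.

Lemma subcv_at1 n (f : 'I_1 -> 'I_n) i (a : 'cV[R]_n) :
  (forall k, f k = i) -> subcv_at f a = (a i 0)%:M.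
Proof. by move=> fE; apply/matrixP => k l; rewrite !mxE fE (ord1 k) (ord1 l). Qed.

Lemma submx_at1 n (f : 'I_1 -> 'I_n) (g : 'I_1 -> 'I_n) i j (M : 'M[R]_n) :
  (forall k, f k = i) -> (forall k, g k = j) -> submx_at f g M = (M i j)%:M.
Proof. by move=> fE gE; apply/matrixP => k l; rewrite !mxE fE gE (ord1 k) (ord1 l). Qed.

End EssentialAt.

Lemma enum_val_setT (k : 'I_#|[set: 'I_2]%SET|) :
  val (@enum_val _ (mem [set: 'I_2]%SET) k) = val k.
Proof.
have k2 : (val k < 2)%N by rewrite (leq_trans (ltn_ord k)) // cardsT card_ord.
by rewrite (enum_val_nth ord0) enum_setT -enumT; exact: nth_enum_ord.
Qed.

Lemma enum_val_set1 (i : 'I_2) (k : 'I_#|[set i]%SET|) : @enum_val _ (mem [set i]%SET) k = i.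
Proof. by have := enum_valP k; rewrite inE => /eqP. Qed.

Lemma enum_val_setC1 (i j : 'I_2) (k : 'I_#|~: [set i]%SET|) :
  i != j -> @enum_val _ (mem (~: [set i]%SET)) k = j.
Proof. by have := enum_valP k; rewrite !inE => ki ij; apply: ord2_other ki. Qed.

Lemma card_setC1_ord2 (i : 'I_2) : #|~: [set i]%SET| = 1%N.
Proof. by have := cardsC [set i]%SET; rewrite cards1 card_ord => -[]. Qed.

Lemma subsets_ord2 (I : {set 'I_2}) :
  [\/ I = finset.set0, I = [set idx1]%SET, I = [set idx2]%SET | I = [set: 'I_2]%SET].
Proof.
have E (b1 b2 : bool) : idx1 \in I = b1 -> idx2 \in I = b2 ->
    I = [set k | if k == idx1 then b1 else b2]%SET.
  by move=> h1 h2; apply/setP => k; rewrite inE; case: (ord2_cases k) => ->.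
case h1: (idx1 \in I); case h2: (idx2 \in I); rewrite (E _ _ h1 h2).
- by apply: Or44; apply/setP => k; rewrite !inE; case: ifP.
- by apply: Or42; apply/setP => k; rewrite !inE; case: ifP.
- by apply: Or43; apply/setP => k; rewrite !inE; case: (ord2_cases k) => ->.
- by apply: Or41; apply/setP => k; rewrite !inE; case: ifP.
Qed.

Section EssentialSigma.
Variable R : realType.
Variable rho : R.
Hypotheses (rho_gtN1 : -1 < rho) (rho_lt1 : rho < 1).
Implicit Types (i j : 'I_2) (b : 'cV[R]_2).

Lemma Sigma_inv_mul_gt0 (b : 'cV[R]_2) i j : i != j ->
  (0 < (invmx (Sigma rho) *m b) i 0) = (rho * b j 0 < b i 0).
Proof.
move=> ij; rewrite (Sigma_inv_mulE rho_gtN1 rho_lt1 _ ij) pmulr_lgt0 ?subr_gt0 //.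
by rewrite invr_gt0 (one_sub_rho2_gt0 rho_gtN1 rho_lt1).
Qed.

Lemma Sigma_inv_mul_ge0 (b : 'cV[R]_2) i j : i != j ->
  (0 <= (invmx (Sigma rho) *m b) i 0) = (rho * b j 0 <= b i 0).
Proof.
move=> ij; rewrite (Sigma_inv_mulE rho_gtN1 rho_lt1 _ ij) pmulr_lge0 ?subr_ge0 //.
by rewrite invr_gt0 (one_sub_rho2_gt0 rho_gtN1 rho_lt1).
Qed.

Lemma is_qp_min_self (b : 'cV[R]_2) :
  (forall k, 0 <= (invmx (Sigma rho) *m b) k 0) -> is_qp_min (Sigma rho) b b.
Proof.
move=> b_pos; split=> [k|x bx]; first exact: lexx.
have n12 : idx1 != idx2 by [].
have n21 : idx2 != idx1 by [].
have := b_pos idx1; have := b_pos idx2.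
rewrite (Sigma_inv_mul_ge0 _ n12) (Sigma_inv_mul_ge0 _ n21) => b2 b1.
by rewrite !(qform_SigmaE rho_gtN1 rho_lt1 _ n12); apply: (q2_le_shift rho_gtN1 rho_lt1).
Qed.

(* The candidate minimiser [Sigma_{.I} Sigma_{II}^-1 b_I] for [I = {i}]. *)
Definition edge_min (i : 'I_2) (b : 'cV[R]_2) : 'cV[R]_2 := b i 0 *: col i (Sigma rho).

Lemma edge_min_self i b : edge_min i b i 0 = b i 0.
Proof. by rewrite !mxE eqxx mulr1. Qed.

Lemma edge_min_other i j b : i != j -> edge_min i b j 0 = rho * b i 0.
Proof. by move=> ij; rewrite !mxE eq_sym (negbTE ij) mulrC. Qed.

Lemma qform_edge_min i j b : i != j -> qform (Sigma rho) (edge_min i b) = b i 0 ^+ 2.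
Proof.
move=> ij; rewrite (qform_SigmaE rho_gtN1 rho_lt1 _ ij) edge_min_self.
by rewrite edge_min_other // (q2_edge rho_gtN1 rho_lt1).
Qed.

Lemma is_qp_min_edge i j b : i != j -> 0 <= b i 0 -> b j 0 <= rho * b i 0 ->
  is_qp_min (Sigma rho) b (edge_min i b).
Proof.
move=> ij b_i bj; split=> [k|x bx].
  case: (eqVneq k i) => [->|/(ord2_other ij) ->].
    by rewrite edge_min_self.
  by rewrite edge_min_other.
rewrite (qform_edge_min _ ij) (qform_SigmaE rho_gtN1 rho_lt1 _ ij).
apply: le_trans (q2_ge_sqr rho_gtN1 rho_lt1 _ _); have := bx i; nra.
Qed.

Lemma essential_atT m mc (f : 'I_m -> 'I_2) (fc : 'I_mc -> 'I_2) (b bt : 'cV[R]_2) :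
  m = 2%N -> mc = 0%N -> (forall k, val (f k) = val k) ->
  essential_at f fc (Sigma rho) b bt <->
  bt = b /\ forall k, 0 < (invmx (Sigma rho) *m b) k 0.
Proof.
move=> em emc; subst m mc => fE.
rewrite /essential_at submx_at_id // !subcv_at_id //.
split=> [[-> b_pos _ _] // | [-> b_pos]].
by split=> //; apply/matrixP => -[].
Qed.

Lemma is_essential_setT b :
  is_essential (Sigma rho) b [set: 'I_2]%SET <->
  forall k, 0 < (invmx (Sigma rho) *m b) k 0.
Proof.
have cardT : #|[set: 'I_2]%SET| = 2%N by rewrite cardsT card_ord.
have cardCT : #|~: [set: 'I_2]%SET| = 0%N by rewrite finset.setCT cards0.
have essT := essential_atT _ _ _ cardT cardCT enum_val_setT.
rewrite is_essentialE; split=> [[_ [bt [_ /essT [_ b_pos]]]] // | b_pos].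
split; first by apply/set0Pn; exists idx1; rewrite inE.
exists b; split; first by apply: is_qp_min_self => k; apply: ltW.
exact/essT.
Qed.

Lemma essential_at1 m mc (f : 'I_m -> 'I_2) (fc : 'I_mc -> 'I_2) i j b bt :
  m = 1%N -> mc = 1%N -> (forall k, f k = i) -> (forall k, fc k = j) -> i != j ->
  essential_at f fc (Sigma rho) b bt <->
  [/\ bt i 0 = b i 0, 0 < b i 0, bt j 0 = rho * b i 0 & b j 0 <= bt j 0].
Proof.
move=> em emc; subst m mc => fE fcE ij.
have cv1 (x y : R) : (x%:M = y%:M :> 'cV[R]_1) <-> x = y.
  by split=> [/matrixP/(_ 0 0)|->]; rewrite // !mxE.
have Sji : Sigma rho j i = rho by rewrite Sigma_offdiag // eq_sym.
rewrite /essential_at (submx_at1 _ fE fE) (submx_at1 _ fcE fE) !(subcv_at1 _ fE).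
rewrite !(subcv_at1 _ fcE) Sji Sigma_diag invmx1 mulmx1 mul1mx mul_scalar_mx scale_scalar_mx.
split=> [[/cv1 bti /(_ 0) b_i /cv1 btj /(_ 0) bj] | [bti b_i btj bj]].
  by move: b_i bj; rewrite !mxE /= !mulr1n.
split; [exact/cv1 | move=> k | exact/cv1 | move=> k];
  by rewrite (ord1 k) !mxE /= !mulr1n.
Qed.

Lemma is_essential_set1 i j b : i != j ->
  is_essential (Sigma rho) b [set i]%SET <-> 0 < b i 0 /\ b j 0 <= rho * b i 0.
Proof.
move=> ij; have ess1 := essential_at1 b _ (cards1 i) (card_setC1_ord2 i)
  (@enum_val_set1 i) (fun k => enum_val_setC1 k ij) ij.
rewrite is_essentialE; split=> [[_ [bt [_ /ess1 [_ ? <- ?]]]] // | [b_i bj]].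
split; first by apply/set0Pn; exists i; rewrite inE.
exists (edge_min i b); split; first by apply: (is_qp_min_edge ij) => //; apply: ltW.
by apply/ess1; rewrite edge_min_self edge_min_other.
Qed.

Lemma is_essential_Sigma_cases b I : is_essential (Sigma rho) b I ->
  (I = [set: 'I_2]%SET /\ forall i j, i != j -> rho * b j 0 < b i 0) \/
  exists i j, [/\ i != j, I = [set i]%SET, 0 < b i 0 & b j 0 <= rho * b i 0].
Proof.
case: (subsets_ord2 I) => ->.
- by case=> /eqP.
- by move/(is_essential_set1 b (isT : idx1 != idx2)) => [? ?]; right; exists idx1, idx2.
- by move/(is_essential_set1 b (isT : idx2 != idx1)) => [? ?]; right; exists idx2, idx1.
- by move/is_essential_setT => b_pos; left; split=> // i j ij; rewrite -Sigma_inv_mul_gt0.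
Qed.

Lemma is_essential_Sigma_uniq b I J :
  is_essential (Sigma rho) b I -> is_essential (Sigma rho) b J -> I = J.
Proof.
move=> /is_essential_Sigma_cases[[-> bI]|[i [j [ij -> b_i bj]]]].
  case/is_essential_Sigma_cases=> [[-> //]|[i [j [ij -> _ bj]]]].
  by exfalso; have := bI j i; rewrite eq_sym => /(_ ij); lra.
case/is_essential_Sigma_cases=> [[-> bJ]|[i' [j' [ij' -> b_i' bj']]]].
  by exfalso; have := bJ j i; rewrite eq_sym => /(_ ij); lra.
case: (eqVneq i' i) => [-> //|ii'].
have ei' := ord2_other ij ii'.
have ej' : j' = i by apply: (@ord2_other j); rewrite eq_sym // -ei'.
by exfalso; have r2 := rho_lt1; subst i' j'; nra.
Qed.

Lemma essential_set_SigmaE b I :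
  is_essential (Sigma rho) b I -> essential_set (Sigma rho) b = I.
Proof.
by move=> bI; apply: xget_unique => // J /is_essential_Sigma_uniq; apply.
Qed.

Lemma weak_essential_setT b : essential_set (Sigma rho) b = [set: 'I_2]%SET ->
  weak_essential_set (Sigma rho) b = finset.set0.
Proof. by rewrite /weak_essential_set /= => ->; apply/setP => k; rewrite !inE. Qed.

Lemma row_mul_at1 m (f : 'I_m -> 'I_2) i k b : m = 1%N -> (forall l, f l = i) ->
  ((\row_l Sigma rho k (f l)) *m invmx (submx_at f f (Sigma rho)) *m subcv_at f b) 0 0
  = Sigma rho k i * b i 0.
Proof.
move=> em; subst m => fE.
rewrite (submx_at1 _ fE fE) (subcv_at1 _ fE) Sigma_diag invmx1 mulmx1.
by rewrite !mxE big_ord1 !mxE fE eqxx mulr1n.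
Qed.

Lemma weak_essential_set1 i j b : i != j -> essential_set (Sigma rho) b = [set i]%SET ->
  weak_essential_set (Sigma rho) b =
  (if rho * b i 0 == b j 0 then [set j] else finset.set0)%SET.
Proof.
move=> ij; rewrite /weak_essential_set /= => ->; apply/setP => k; rewrite !inE.
rewrite (row_mul_at1 _ _ (cards1 i) (@enum_val_set1 i)) mxE.
case: (eqVneq k i) => [->|/(ord2_other ij) ->] /=.
  by case: ifP; rewrite !inE // (negbTE ij).
by case: ifP; rewrite !inE ?eqxx.
Qed.

Lemma gtilde_setT b a t : essential_set (Sigma rho) b = [set: 'I_2]%SET ->
  gtilde (Sigma rho) b a t = 2 * t ^- 3 * qform (Sigma rho) a.
Proof.
rewrite /gtilde /= => ->.
have quadT m (f : 'I_m -> 'I_2) : m = 2%N -> (forall k, val (f k) = val k) ->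
    ((subcv_at f a)^T *m invmx (submx_at f f (Sigma rho)) *m subcv_at f a) 0 0
    = qform (Sigma rho) a.
  by move=> em; subst m => fE; rewrite submx_at_id // subcv_at_id.
by rewrite (quadT _ _ _ enum_val_setT) // cardsT card_ord.
Qed.

Lemma gtilde_set1 i b a t : essential_set (Sigma rho) b = [set i]%SET ->
  gtilde (Sigma rho) b a t = 2 * t ^- 3 * a i 0 ^+ 2.
Proof.
rewrite /gtilde /= => ->.
have quad1 m (f : 'I_m -> 'I_2) : m = 1%N -> (forall k, f k = i) ->
    ((subcv_at f a)^T *m invmx (submx_at f f (Sigma rho)) *m subcv_at f a) 0 0
    = a i 0 ^+ 2.
  move=> em; subst m => fE; rewrite (submx_at1 _ fE fE) (subcv_at1 _ fE) Sigma_diag.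
  by rewrite invmx1 mulmx1 tr_scalar_mx -scalar_mxM mxE expr2 mulr1n.
by rewrite (quad1 _ _ (cards1 i) (@enum_val_set1 i)).
Qed.

End EssentialSigma.

Section RealFunctions.
Variable R : realType.

Lemma is_derive_inv (x : R) : x != 0 -> is_derive x 1 (fun y : R => y^-1) (- x ^- 2).
Proof.
move=> x0; apply: is_derive_eq (is_deriveV x0 (is_derive_id x 1)) _.
by rewrite /= scaler1.
Qed.

Lemma is_derive_hyperbola (P Q S x : R) : x != 0 ->
  is_derive x 1 (fun y : R => P * y^-1 + Q + S * y) (- P * x ^- 2 + S).
Proof.
move=> x0; have -> : (fun y : R => P * y^-1 + Q + S * y) =
    P \*: (fun y : R => y^-1) + cst Q + S \*: id by apply/funext.
apply: is_derive_eq (is_deriveD (is_deriveD (is_deriveZ P (is_derive_inv x0))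
  (is_derive_cst Q x 1)) (is_deriveZ S (is_derive_id x 1))) _.
by rewrite addr0 scaler1 /GRing.scale /= mulrN mulNr.
Qed.

Lemma is_derive_inv_sqr (P S x : R) : x != 0 ->
  is_derive x 1 (fun y : R => - P * y ^- 2 + S) (2 * P * x ^- 3).
Proof.
move=> x0; have x20 : x ^+ 2 != 0 by rewrite expf_neq0.
have dsqr : is_derive x 1 (fun y : R => y ^+ 2) (2 * x).
  by apply: is_derive_eq (is_deriveX 2 (is_derive_id x 1)) _; rewrite expr1 scaler1.
have -> : (fun y : R => - P * y ^- 2 + S) = (- P) \*: (fun y : R => (y ^+ 2)^-1) + cst S.
  by apply/funext.
have dinv := @is_deriveV R (fun y => y ^+ 2) x (2 * x) 1 x20 dsqr.
apply: is_derive_eq (is_deriveD (is_deriveZ (- P) dinv) (is_derive_cst S x 1)) _.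
by rewrite addr0 /GRing.scale /=; field.
Qed.

Lemma d2_hyperbola (f : R -> R) (P Q S s : R) : 0 < s ->
  (forall x, 0 < x -> f x = P * x^-1 + Q + S * x) -> d2 f s = 2 * P * s ^- 3.
Proof.
move=> s0 fE.
have df x : 0 < x -> f^`() x = - P * x ^- 2 + S.
  move=> x0; have df := is_derive_hyperbola P Q S (lt0r_neq0 x0).
  rewrite derive1E -(@derive_val _ _ _ _ _ _ _ df).
  by apply: near_eq_derive; near=> y; rewrite fE //; near: y; exact: lt_nbhsr.
have d2f := is_derive_inv_sqr P S (lt0r_neq0 s0).
rewrite /d2 derive1E -(@derive_val _ _ _ _ _ _ _ d2f).
by apply: near_eq_derive; near=> y; rewrite df //; near: y; exact: lt_nbhsr.
Unshelve. all: by end_near.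
Qed.

Lemma unique_min_sqr_gap (f : R -> R) (s K : R) : 0 < s -> 0 < K ->
  (forall t, 0 < t -> f s + K * (t - s) ^+ 2 / t <= f t) -> unique_min f s.
Proof.
move=> s0 K0 fge; have gap_ge0 t : 0 < t -> 0 <= K * (t - s) ^+ 2 / t.
  by move=> t0; rewrite divr_ge0 ?(ltW t0) // mulr_ge0 ?sqr_ge0 ?(ltW K0).
split=> // t t0; first by apply: le_trans (fge t t0); rewrite lerDl gap_ge0.
move=> ft; have := fge t t0; rewrite ft gerDl => gap_le0.
have /eqP : K * (t - s) ^+ 2 / t = 0 by apply/eqP; rewrite eq_le gap_le0 gap_ge0.
by rewrite !mulf_eq0 invr_eq0 (gt_eqF K0) (gt_eqF t0) /= orbF orbb subr_eq0 => /eqP.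
Qed.

End RealFunctions.

Lemma tangent_weight_gt0 (F : realFieldType) (c a m s : F) : 0 < c -> 0 < s ->
  s ^+ 2 * (c + m ^+ 2) = c + a ^+ 2 -> 0 < a + m -> 0 < a + s * m.
Proof.
move=> c0 s0 hs am.
have key : (a + s * m) * (a - s * m) * (c + m ^+ 2) = c * (a - m) * (a + m).
  have -> : (a + s * m) * (a - s * m) * (c + m ^+ 2) =
    a ^+ 2 * (c + m ^+ 2) - m ^+ 2 * (s ^+ 2 * (c + m ^+ 2)) by ring.
  by rewrite hs; ring.
have cm : 0 < c + m ^+ 2 by rewrite ltr_wpDr ?sqr_ge0.
have [m0|m0] := lerP m 0.
  have am' : 0 < (a - m) * (a + m) by rewrite mulr_gt0 //; lra.
  have : 0 < (a + s * m) * (a - s * m) * (c + m ^+ 2) by rewrite key -mulrA mulr_gt0.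
  rewrite pmulr_lgt0 //; have : s * m <= 0 by rewrite pmulr_rle0.
  nra.
have [a0|a0] := lerP 0 a; first by rewrite ltr_wpDl // mulr_gt0.
have am' : (a - m) * (a + m) < 0 by rewrite nmulr_rlt0; lra.
have : (a + s * m) * (a - s * m) * (c + m ^+ 2) < 0 by rewrite key -mulrA pmulr_rlt0.
rewrite pmulr_llt0 //; have : 0 < s * m by rewrite mulr_gt0.
nra.
Qed.

Section Corollary.
Variable R : realType.
Variables rho alpha mu : R.
Hypotheses (rho_gtN1 : -1 < rho) (rho_lt1 : rho < 1).
Hypotheses (alpha_gt0 : 0 < alpha) (mu_gt0 : 0 < mu).
Implicit Types (s t : R) (x : 'cV[R]_2) (i j : 'I_2).

Lemma bvec1 t : bvec alpha mu t idx1 0 = 1 + t.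
Proof. by rewrite mxE. Qed.

Lemma bvec2 t : bvec alpha mu t idx2 0 = alpha + mu * t.
Proof. by rewrite mxE. Qed.

Lemma bvec_gt0 t k : 0 <= t -> 0 < bvec alpha mu t k 0.
Proof.
move=> t0; case: (ord2_cases k) => ->; rewrite ?bvec1 ?bvec2.
  by rewrite ltr_pwDl.
by rewrite ltr_pwDl // mulr_ge0 // ltW.
Qed.

Lemma col2_bvec0 k : col2 1 alpha k 0 = bvec alpha mu 0 k 0.
Proof. by case: (ord2_cases k) => ->; rewrite !mxE /= ?addr0 ?mulr0 ?addr0. Qed.

Lemma qform_Sigma_ge0 x : 0 <= qform (Sigma rho) x.
Proof.
rewrite (qform_SigmaE rho_gtN1 rho_lt1 _ (isT : idx1 != idx2)).
exact: le_trans (sqr_ge0 _) (q2_ge_sqr rho_gtN1 rho_lt1 _ _).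
Qed.

Lemma g_ge t L : 0 < t ->
  (forall x, vle (bvec alpha mu t) x -> L <= qform (Sigma rho) x) ->
  t^-1 * L <= g rho alpha mu t.
Proof.
move=> t0 Lle; rewrite /g ler_pM2l ?invr_gt0 //; apply: lb_le_inf.
  by exists (qform (Sigma rho) (bvec alpha mu t)), (bvec alpha mu t).
by move=> _ [x bx <-]; apply: Lle.
Qed.

Lemma g_le t x : 0 < t -> vle (bvec alpha mu t) x ->
  g rho alpha mu t <= t^-1 * qform (Sigma rho) x.
Proof.
move=> t0 bx; rewrite /g ler_pM2l ?invr_gt0 //; apply: ge_inf; last by exists x.
by exists 0 => _ [y _ <-]; apply: qform_Sigma_ge0.
Qed.

Lemma g_qp_minE t x : 0 < t -> is_qp_min (Sigma rho) (bvec alpha mu t) x ->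
  g rho alpha mu t = t^-1 * qform (Sigma rho) x.
Proof.
by move=> t0 [bx xmin]; apply/eqP; rewrite eq_le g_le // g_ge.
Qed.

Lemma g0E t : t != 0 -> g0 rho alpha mu t = t^-1 * qform (Sigma rho) (bvec alpha mu t).
Proof.
move=> t0; have c0 := one_sub_rho2_neq0 rho_gtN1 rho_lt1.
rewrite (qform_SigmaE rho_gtN1 rho_lt1 _ (isT : idx1 != idx2)) bvec1 bvec2 /g0 /q2.
by field; rewrite t0 c0.
Qed.

Lemma g_le_g0 t : 0 < t -> g rho alpha mu t <= g0 rho alpha mu t.
Proof. by move=> t0; rewrite g0E ?gt_eqF // g_le. Qed.

Lemma g_ge_Cauchy_Schwarz t w1 w2 : 0 < t -> 0 <= w1 -> 0 <= w2 ->
  0 < w1 ^+ 2 + 2 * rho * w1 * w2 + w2 ^+ 2 ->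
  t^-1 * ((w1 * (1 + t) + w2 * (alpha + mu * t)) ^+ 2
          / (w1 ^+ 2 + 2 * rho * w1 * w2 + w2 ^+ 2)) <= g rho alpha mu t.
Proof.
move=> t0 w10 w20 E0; apply: g_ge => // x bx.
rewrite (qform_SigmaE rho_gtN1 rho_lt1 _ (isT : idx1 != idx2)) ler_pdivrMr //.
apply: le_trans (q2_Cauchy_Schwarz rho_gtN1 rho_lt1 w1 w2 _ _).
have := bx idx1; have := bx idx2; rewrite bvec1 bvec2 => b2x b1x.
have b1 := bvec_gt0 idx1 (ltW t0); have b2 := bvec_gt0 idx2 (ltW t0).
rewrite bvec1 in b1; rewrite bvec2 in b2.
have wb : 0 <= w1 * (1 + t) + w2 * (alpha + mu * t).
  by rewrite addr_ge0 // mulr_ge0 // ltW.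
have wx : w1 * (1 + t) + w2 * (alpha + mu * t) <= w1 * x idx1 0 + w2 * x idx2 0.
  by rewrite lerD // ler_wpM2l.
by rewrite ler_sqr ?nnegrE // (le_trans wb wx).
Qed.

Lemma quad_coef_gt0 v : 0 < 1 + v ^+ 2 - 2 * v * rho.
Proof.
have c0 := one_sub_rho2_gt0 rho_gtN1 rho_lt1.
have -> : 1 + v ^+ 2 - 2 * v * rho = (v - rho) ^+ 2 + (1 - rho ^+ 2) by ring.
by rewrite ltr_wpDl ?sqr_ge0.
Qed.

Lemma t00_gt0 : 0 < t00 rho alpha mu.
Proof. by rewrite sqrtr_gt0 divr_gt0 ?quad_coef_gt0. Qed.

Lemma t00_sqr :
  (1 + mu ^+ 2 - 2 * mu * rho) * t00 rho alpha mu ^+ 2 = 1 + alpha ^+ 2 - 2 * alpha * rho.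
Proof.
rewrite sqr_sqrtr ?divr_ge0 ?ltW ?quad_coef_gt0 //.
by rewrite mulrC divfK ?gt_eqF ?quad_coef_gt0.
Qed.

Lemma unique_min_g0 : unique_min (g0 rho alpha mu) (t00 rho alpha mu).
Proof.
have c0 := one_sub_rho2_gt0 rho_gtN1 rho_lt1; have C0 := quad_coef_gt0 mu.
apply: (unique_min_sqr_gap t00_gt0 (divr_gt0 C0 c0)) => t t0.
rewrite le_eqVlt; apply/orP; left; apply/eqP.
have s0 := t00_gt0; rewrite /g0 -t00_sqr.
by field; rewrite !gt_eqF.
Qed.

Section Interior.
Variable s : R.
Hypotheses (s_gt0 : 0 < s)
  (s_sqr : (1 + mu ^+ 2 - 2 * mu * rho) * s ^+ 2 = 1 + alpha ^+ 2 - 2 * alpha * rho).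

(* [(w1, w2) = (1 - rho^2) Sigma^-1 b(s)]: the Cauchy-Schwarz direction that is
   tight at [t = s]. *)
Let w1 := 1 + s - rho * (alpha + mu * s).
Let w2 := alpha + mu * s - rho * (1 + s).
Let k := w1 + mu * w2.

Lemma interior_w2_gt0 : 2 * rho < alpha + mu -> 0 < w2.
Proof.
move=> h; have -> : w2 = (alpha - rho) + s * (mu - rho) by rewrite /w2; ring.
apply: (tangent_weight_gt0 (one_sub_rho2_gt0 rho_gtN1 rho_lt1) s_gt0); last by lra.
have -> : 1 - rho ^+ 2 + (mu - rho) ^+ 2 = 1 + mu ^+ 2 - 2 * mu * rho by ring.
by rewrite mulrC s_sqr; ring.
Qed.

Lemma interior_w1_gt0 : 2 * rho * alpha * mu < alpha + mu -> 0 < w1.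
Proof.
move=> h; have a0 := lt0r_neq0 alpha_gt0; have m0 := lt0r_neq0 mu_gt0.
have -> : w1 = alpha * ((alpha^-1 - rho) + (s * mu / alpha) * (mu^-1 - rho)).
  by rewrite /w1; field; rewrite a0 m0.
rewrite pmulr_rgt0 //.
apply: (tangent_weight_gt0 (one_sub_rho2_gt0 rho_gtN1 rho_lt1)).
- by rewrite !mulr_gt0 ?invr_gt0.
- have -> : (s * mu / alpha) ^+ 2 * (1 - rho ^+ 2 + (mu^-1 - rho) ^+ 2) =
    (1 + mu ^+ 2 - 2 * mu * rho) * s ^+ 2 / alpha ^+ 2 by field; rewrite a0 m0.
  by rewrite s_sqr; field; rewrite a0.
- rewrite -(pmulr_rgt0 _ (mulr_gt0 alpha_gt0 mu_gt0)).
  have -> : alpha * mu * (alpha^-1 - rho + (mu^-1 - rho)) = alpha + mu - 2 * rho * alpha * mu.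
    by field; rewrite a0 m0.
  by rewrite subr_gt0.
Qed.

Lemma interior_weight_sum : w1 + alpha * w2 = k * s.
Proof.
apply/eqP; rewrite -subr_eq0.
have -> : w1 + alpha * w2 - k * s =
  1 + alpha ^+ 2 - 2 * alpha * rho - (1 + mu ^+ 2 - 2 * mu * rho) * s ^+ 2.
  by rewrite /k /w1 /w2; ring.
by rewrite s_sqr subrr.
Qed.

Lemma interior_g0 : g0 rho alpha mu s = 2 * k / (1 - rho ^+ 2).
Proof.
have c0 := one_sub_rho2_neq0 rho_gtN1 rho_lt1.
by rewrite /g0 -s_sqr /k /w1 /w2; field; rewrite c0 gt_eqF.
Qed.

Lemma interior_bound t : 0 < t -> 0 < k ->
  t^-1 * ((w1 * (1 + t) + w2 * (alpha + mu * t)) ^+ 2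
          / (w1 ^+ 2 + 2 * rho * w1 * w2 + w2 ^+ 2))
  = g0 rho alpha mu s + k / (2 * (1 - rho ^+ 2) * s) * (t - s) ^+ 2 / t.
Proof.
move=> t0 k0; have c0 := one_sub_rho2_neq0 rho_gtN1 rho_lt1.
have -> : w1 * (1 + t) + w2 * (alpha + mu * t) = k * (s + t).
  have -> : w1 * (1 + t) + w2 * (alpha + mu * t) = w1 + alpha * w2 + k * t.
    by rewrite /k; ring.
  by rewrite interior_weight_sum; ring.
have -> : w1 ^+ 2 + 2 * rho * w1 * w2 + w2 ^+ 2 = 2 * (1 - rho ^+ 2) * k * s.
  have -> : w1 ^+ 2 + 2 * rho * w1 * w2 + w2 ^+ 2 =
    (1 - rho ^+ 2) * (w1 + alpha * w2 + k * s) by rewrite /k /w1 /w2; ring.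
  by rewrite interior_weight_sum; ring.
by rewrite interior_g0; field; rewrite c0 !gt_eqF.
Qed.

Lemma regime_interior : 2 * rho < alpha + mu -> 2 * rho * alpha * mu < alpha + mu ->
  regime rho alpha mu s [set: 'I_2] finset.set0
    (g0 rho alpha mu s) (d2 (g0 rho alpha mu) s).
Proof.
move=> h2 h1; have w1_gt0 := interior_w1_gt0 h1; have w2_gt0 := interior_w2_gt0 h2.
have k_gt0 : 0 < k by rewrite addr_gt0 // mulr_gt0.
have c0 := one_sub_rho2_gt0 rho_gtN1 rho_lt1.
have b_pos k' : 0 < (invmx (Sigma rho) *m bvec alpha mu s) k' 0.
  case: (ord2_cases k') => ->.
    rewrite (Sigma_inv_mul_gt0 rho_gtN1 rho_lt1 _ (isT : idx1 != idx2)).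
    by rewrite bvec1 bvec2 -subr_gt0.
  rewrite (Sigma_inv_mul_gt0 rho_gtN1 rho_lt1 _ (isT : idx2 != idx1)).
  by rewrite bvec1 bvec2 -subr_gt0.
have ess := essential_set_SigmaE rho_gtN1 rho_lt1
  ((is_essential_setT rho_gtN1 rho_lt1 _).2 b_pos).
have gs : g rho alpha mu s = g0 rho alpha mu s.
  rewrite g0E ?gt_eqF // (g_qp_minE s_gt0 (is_qp_min_self rho_gtN1 rho_lt1 _)) // => k'.
  exact: ltW.
split=> //.
- have K_gt0 : 0 < k / (2 * (1 - rho ^+ 2) * s) by rewrite divr_gt0 // !mulr_gt0.
  apply: (unique_min_sqr_gap s_gt0 K_gt0) => t t0; rewrite gs -interior_bound //.
  apply: g_ge_Cauchy_Schwarz; rewrite ?ltW //.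
  have -> : w1 ^+ 2 + 2 * rho * w1 * w2 + w2 ^+ 2 =
    (w1 + rho * w2) ^+ 2 + (1 - rho ^+ 2) * w2 ^+ 2 by ring.
  by rewrite ltr_wpDl ?sqr_ge0 // mulr_gt0 ?exprn_gt0.
- exact: weak_essential_setT.
rewrite (gtilde_setT _ _ ess) (qform_SigmaE rho_gtN1 rho_lt1 _ (isT : idx1 != idx2)).
rewrite !mxE /= (d2_hyperbola s_gt0 (fun y _ => erefl)) /q2; ring.
Qed.

End Interior.

Definition g_edge i t : R := t^-1 * bvec alpha mu t i 0 ^+ 2.

Lemma g_ge_edge i t : 0 < t -> g_edge i t <= g rho alpha mu t.
Proof.
move=> t0; apply: g_ge => // x bx.
have [j ij] : exists j, i != j by case: (ord2_cases i) => ->; [exists idx2 | exists idx1].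
rewrite (qform_SigmaE rho_gtN1 rho_lt1 _ ij).
apply: le_trans (q2_ge_sqr rho_gtN1 rho_lt1 _ _).
by rewrite ler_sqr ?nnegrE ?(bx i) // ltW // (lt_le_trans (bvec_gt0 i (ltW t0))).
Qed.

Section Edge.
Variables (i j : 'I_2) (q s : R).
Hypotheses (ij : i != j) (q_gt0 : 0 < q) (s_gt0 : 0 < s).
Hypothesis bvec_i : forall t, bvec alpha mu t i 0 = q * (s + t).

Lemma g_edgeE t : 0 < t -> g_edge i t = (q * s) ^+ 2 * t^-1 + 2 * q ^+ 2 * s + q ^+ 2 * t.
Proof. by move=> t0; rewrite /g_edge bvec_i; field; rewrite gt_eqF. Qed.

Lemma g_edge_at : g_edge i s = 4 * q ^+ 2 * s.
Proof. by rewrite g_edgeE //; field; rewrite gt_eqF. Qed.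

Lemma d2_g_edge : d2 (g_edge i) s = 2 * q ^+ 2 / s.
Proof. by rewrite (d2_hyperbola s_gt0 g_edgeE); field; rewrite gt_eqF. Qed.

Lemma regime_edge : bvec alpha mu s j 0 <= rho * bvec alpha mu s i 0 ->
  regime rho alpha mu s [set i]
    (if rho * bvec alpha mu s i 0 == bvec alpha mu s j 0 then [set j] else finset.set0)%SET
    (g_edge i s) (d2 (g_edge i) s).
Proof.
move=> bj; have bi := bvec_gt0 i (ltW s_gt0).
have ess := essential_set_SigmaE rho_gtN1 rho_lt1
  ((is_essential_set1 rho_gtN1 rho_lt1 _ ij).2 (conj bi bj)).
have gs : g rho alpha mu s = g_edge i s.
  rewrite (g_qp_minE s_gt0 (is_qp_min_edge rho_gtN1 rho_lt1 ij (ltW bi) bj)).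
  by rewrite (qform_edge_min rho_gtN1 rho_lt1 _ ij).
split=> //.
- apply: (unique_min_sqr_gap s_gt0 (exprn_gt0 2 q_gt0)) => t t0.
  have -> : g rho alpha mu s + q ^+ 2 * (t - s) ^+ 2 / t = g_edge i t.
    by rewrite gs !g_edgeE //; field; rewrite !lt0r_neq0.
  exact: g_ge_edge.
- exact: weak_essential_set1 ij ess.
rewrite (gtilde_set1 _ _ ess) col2_bvec0 bvec_i addr0 d2_g_edge.
by field; rewrite gt_eqF.
Qed.

Lemma regime_edge_strict : bvec alpha mu s j 0 < rho * bvec alpha mu s i 0 ->
  regime rho alpha mu s [set i] finset.set0 (g_edge i s) (d2 (g_edge i) s).
Proof. by move=> bj; have := regime_edge (ltW bj); rewrite gt_eqF. Qed.

Lemma tangency_edge : rho * bvec alpha mu s i 0 = bvec alpha mu s j 0 ->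
  [/\ t00 rho alpha mu = s,
      regime rho alpha mu s [set i] [set j] (g_edge i s) (d2 (g_edge i) s)
    & g0 rho alpha mu (t00 rho alpha mu) = g_edge i s].
Proof.
move=> tangent; have bj : bvec alpha mu s j 0 <= rho * bvec alpha mu s i 0.
  by rewrite tangent.
have := regime_edge bj; rewrite tangent eqxx => reg.
have [[_ gmin _] _ _ gs _] := reg.
have g0s : g0 rho alpha mu s = g_edge i s.
  rewrite g0E ?gt_eqF // (qform_SigmaE rho_gtN1 rho_lt1 _ ij) -tangent.
  by rewrite (q2_edge rho_gtN1 rho_lt1).
have [t0_gt0 g0min g0uniq] := unique_min_g0.
suff t00s : t00 rho alpha mu = s by rewrite t00s.
apply/esym/g0uniq => //; apply/eqP; rewrite eq_le g0min // andbT g0s -gs.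
apply: le_trans (gmin _ t0_gt0) (g_le_g0 t0_gt0).
Qed.

End Edge.

Lemma g_edge1 : g_edge idx1 = @g1 R.
Proof. by apply/funext => t; rewrite /g_edge bvec1. Qed.

Lemma g_edge2 : g_edge idx2 = g2 alpha mu.
Proof. by apply/funext => t; rewrite /g_edge bvec2. Qed.

Lemma bvec1_affine t : bvec alpha mu t idx1 0 = 1 * (t01 R + t).
Proof. by rewrite bvec1 mul1r. Qed.

Lemma bvec2_affine t : bvec alpha mu t idx2 0 = mu * (t02 alpha mu + t).
Proof. by rewrite bvec2 /t02; field; rewrite lt0r_neq0. Qed.

Lemma t02_gt0 : 0 < t02 alpha mu.
Proof. exact: divr_gt0. Qed.

Lemma regime_t00 : 2 * rho < alpha + mu -> 2 * rho * alpha * mu < alpha + mu ->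
  regime rho alpha mu (t00 rho alpha mu) [set: 'I_2] finset.set0
    (g0 rho alpha mu (t00 rho alpha mu)) (d2 (g0 rho alpha mu) (t00 rho alpha mu)).
Proof. exact: regime_interior t00_gt0 t00_sqr. Qed.

Lemma regime_edge1 : alpha + mu < 2 * rho ->
  regime rho alpha mu (t01 R) [set idx1] finset.set0 (g1 (t01 R)) (d2 (@g1 R) (t01 R)).
Proof.
move=> h; rewrite -g_edge1.
apply: (regime_edge_strict (isT : idx1 != idx2) ltr01 ltr01 bvec1_affine).
by rewrite bvec1 bvec2 /t01; lra.
Qed.

Lemma tangency_edge1 : 2 * rho = alpha + mu ->
  [/\ t00 rho alpha mu = t01 R,
      regime rho alpha mu (t01 R) [set idx1] [set idx2] (g1 (t01 R)) (d2 (@g1 R) (t01 R))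
    & g0 rho alpha mu (t00 rho alpha mu) = g1 (t01 R)].
Proof.
move=> h; rewrite -g_edge1.
apply: (tangency_edge (isT : idx1 != idx2) ltr01 ltr01 bvec1_affine).
by rewrite bvec1 bvec2 /t01; lra.
Qed.

Lemma regime_edge2 : alpha + mu < 2 * rho * alpha * mu ->
  regime rho alpha mu (t02 alpha mu) [set idx2] finset.set0
    (g2 alpha mu (t02 alpha mu)) (d2 (g2 alpha mu) (t02 alpha mu)).
Proof.
move=> h; rewrite -g_edge2.
apply: (regime_edge_strict (isT : idx2 != idx1) mu_gt0 t02_gt0 bvec2_affine).
have m0 := lt0r_neq0 mu_gt0; rewrite bvec1 bvec2 -(ltr_pM2l mu_gt0) /t02.
have -> : mu * (1 + alpha / mu) = alpha + mu by field.
have -> : mu * (rho * (alpha + mu * (alpha / mu))) = 2 * rho * alpha * mu by field.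
exact: h.
Qed.

Lemma tangency_edge2 : 2 * rho * alpha * mu = alpha + mu ->
  [/\ t00 rho alpha mu = t02 alpha mu,
      regime rho alpha mu (t02 alpha mu) [set idx2] [set idx1]
        (g2 alpha mu (t02 alpha mu)) (d2 (g2 alpha mu) (t02 alpha mu))
    & g0 rho alpha mu (t00 rho alpha mu) = g2 alpha mu (t02 alpha mu)].
Proof.
move=> h; rewrite -g_edge2.
apply: (tangency_edge (isT : idx2 != idx1) mu_gt0 t02_gt0 bvec2_affine).
have m0 := lt0r_neq0 mu_gt0; apply: (mulfI m0); rewrite bvec1 bvec2 /t02.
have -> : mu * (rho * (alpha + mu * (alpha / mu))) = 2 * rho * alpha * mu by field.
by rewrite h; field.
Qed.

Lemma g2_t02 : g2 alpha mu (t02 alpha mu) = 4 * alpha * mu.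
Proof.
rewrite -g_edge2 (g_edge_at t02_gt0 bvec2_affine) /t02.
by field; rewrite lt0r_neq0.
Qed.

Lemma d2_g2_t02 : d2 (g2 alpha mu) (t02 alpha mu) = 2 * alpha^-1 * mu ^+ 3.
Proof.
rewrite -g_edge2 (d2_g_edge t02_gt0 bvec2_affine) /t02.
by field; rewrite !lt0r_neq0.
Qed.

End Corollary.

Lemma g1_t01 (R : realType) : g1 (t01 R) = 4.
Proof. by rewrite /g1 /t01 invr1 mul1r; ring. Qed.

Lemma d2_g1_t01 (R : realType) : d2 (@g1 R) (t01 R) = 2.
Proof.
rewrite (@d2_hyperbola _ _ 1 2 1 _ ltr01) ?expr1n ?invr1 ?mulr1 // => t t0.
by rewrite /g1; field; rewrite lt0r_neq0.
Qed.

Unset Implicit Arguments.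

Theorem corollary6p3 (R : realType) (rho alpha mu : R) :
  -1 < rho -> rho < 1 -> 0 < alpha -> 0 < mu ->
  (* (i) *)
  ((mu < 1 /\ alpha < 1) \/ [/\ mu < 1, 1 <= alpha & mu <= alpha^-1]
     \/ [/\ 1 <= mu, alpha < 1 & mu <= alpha^-1] ->
   (rho < (alpha + mu) / 2 ->
      regime rho alpha mu (t00 rho alpha mu) [set: 'I_2] finset.set0
        (g0 rho alpha mu (t00 rho alpha mu))
        (d2 (g0 rho alpha mu) (t00 rho alpha mu))) /\
   (rho = (alpha + mu) / 2 ->
      [/\ t00 rho alpha mu = (t01 R),
          regime rho alpha mu (t01 R) [set idx1] [set idx2] (g1 (t01 R)) (d2 (@g1 R) (t01 R)),
          g0 rho alpha mu (t00 rho alpha mu) = g1 (t01 R),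
          g1 (t01 R) = 4
        & d2 (@g1 R) (t01 R) = 2]) /\
   ((alpha + mu) / 2 < rho ->
      [/\ regime rho alpha mu (t01 R) [set idx1] finset.set0 (g1 (t01 R)) (d2 (@g1 R) (t01 R)),
          g1 (t01 R) = 4
        & d2 (@g1 R) (t01 R) = 2])) /\
  (* (ii) *)
  ((1 <= mu /\ 1 <= alpha) \/ [/\ mu < 1, 1 <= alpha & alpha^-1 < mu]
     \/ [/\ 1 <= mu, alpha < 1 & alpha^-1 < mu] ->
   (rho < (alpha + mu) / (2 * alpha * mu) ->
      regime rho alpha mu (t00 rho alpha mu) [set: 'I_2] finset.set0
        (g0 rho alpha mu (t00 rho alpha mu))
        (d2 (g0 rho alpha mu) (t00 rho alpha mu))) /\
   (rho = (alpha + mu) / (2 * alpha * mu) ->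
      [/\ t00 rho alpha mu = t02 alpha mu,
          regime rho alpha mu (t02 alpha mu) [set idx2] [set idx1]
            (g2 alpha mu (t02 alpha mu)) (d2 (g2 alpha mu) (t02 alpha mu)),
          g0 rho alpha mu (t00 rho alpha mu) = g2 alpha mu (t02 alpha mu),
          g2 alpha mu (t02 alpha mu) = 4 * alpha * mu
        & d2 (g2 alpha mu) (t02 alpha mu) = 2 * alpha^-1 * mu ^+ 3]) /\
   ((alpha + mu) / (2 * alpha * mu) < rho ->
      [/\ regime rho alpha mu (t02 alpha mu) [set idx2] finset.set0
            (g2 alpha mu (t02 alpha mu)) (d2 (g2 alpha mu) (t02 alpha mu)),
          g2 alpha mu (t02 alpha mu) = 4 * alpha * mu
        & d2 (g2 alpha mu) (t02 alpha mu) = 2 * alpha^-1 * mu ^+ 3])).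
Proof.
move=> r1 r2 a0 m0; have am0 : 0 < 2 * alpha * mu by rewrite !mulr_gt0.
have am_le1 : mu <= alpha^-1 -> alpha * mu <= 1.
  by move=> h; rewrite -(divff (lt0r_neq0 a0)) ler_pM2l.
have am_gt1 : alpha^-1 < mu -> 1 < alpha * mu.
  by move=> h; rewrite -(divff (lt0r_neq0 a0)) ltr_pM2l.
split=> [cases | cases].
  have am : alpha * mu <= 1.
    by case: cases => [[? ?]|[[_ _ /am_le1 //]|[_ _ /am_le1 //]]]; nra.
  split; [|split].
  - rewrite ltr_pdivlMr // mulrC => h; apply: regime_t00 => //.
    by have [r0|r0] := lerP rho 0; nra.
  - move=> h; have h2 : 2 * rho = alpha + mu by rewrite h; field.
    have [? ? ?] := tangency_edge1 r1 r2 a0 m0 h2.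
    by split=> //; [exact: g1_t01 | exact: d2_g1_t01].
  - rewrite ltr_pdivrMr // mulrC => h.
    by split; [exact: regime_edge1 | exact: g1_t01 | exact: d2_g1_t01].
have am : 1 <= alpha * mu.
  by case: cases => [[? ?]|[[_ _ /am_gt1/ltW //]|[_ _ /am_gt1/ltW //]]]; nra.
split; [|split].
- rewrite ltr_pdivlMr // => h; apply: regime_t00 => //; last by lra.
  by have [r0|r0] := lerP rho 0; nra.
- move=> h; have h2 : 2 * rho * alpha * mu = alpha + mu.
    by rewrite h; field; rewrite !lt0r_neq0.
  have [? ? ?] := tangency_edge2 r1 r2 a0 m0 h2.
  by split=> //; [exact: g2_t02 | exact: d2_g2_t02].
- rewrite ltr_pdivrMr // => h.
  split; [apply: regime_edge2 => //; lra | exact: g2_t02 | exact: d2_g2_t02].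
Qed.
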